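(* Let $q$ be a self-join-free Boolean conjunctive query, let $q_0\subseteq q$, let $\mathbf{db}$ be a database, and let $\mathbf{o}$ be a garbage set for $q_0$ in $\mathbf{db}$. Then every repair of $\mathbf{db}$ satisfies $q$ if and only if every repair of $\mathbf{db}\setminus\mathbf{o}$ satisfies $q$.
   Context: Every relation name has a signature $[n,k]$ ($1\le k\le n$; primary-key positions $1,\dots,k$) and a mode in $\{\mathsf{c},\mathsf{i}\}$. Facts are variable-free atoms; facts are key-equal if same relation name and same primary-key values. A database is a finite set of facts with no two distinct key-equal facts of mode $\mathsf{c}$, all of whose relation names occur in $q$. The block of a fact $A$ in $\mathbf{db}$ is the set of facts of $\mathbf{db}$ key-equal to $A$. A repair of a set of facts is a maximal subset without two distinct key-equal facts. A self-join-free Boolean conjunctive query is a finite set of atoms with distinct relation names, satisfied by a set of facts $\mathbf{s}$ iff some valuation $\theta$ of its variables has $\theta(q)\subseteq\mathbf{s}$; for a fact $A$, $\mathrm{atom}(A)$ is the atom of $q$ with the same relation name. A subset $\mathbf{o}\subseteq\mathbf{db}$ is a garbage set for $q_0$ in $\mathbf{db}$ if (1) for every $A\in\mathbf{o}$, $\mathrm{atom}(A)\in q_0$ and the block of $A$ in $\mathbf{db}$ is included in $\mathbf{o}$; and (2) there is a repair $\mathbf{r}$ of $\mathbf{o}$ such that for every valuation $\theta$ of the variables of $q$, if $\theta(q)\subseteq(\mathbf{db}\setminus\mathbf{o})\cup\mathbf{r}$ then $\theta(q_0)\cap\mathbf{r}=\emptyset$. *)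

From Stdlib Require Import List.
Import ListNotations.
Set Implicit Arguments.

Inductive mode := ModeC | ModeI.

Section CQA.
(* Rname: relation names; Var: variables; Const: constants.
   arity r = n and keylen r = k for the signature [n,k] of r;
   primary-key positions are 1..k, i.e. the first k arguments. *)
Context {Rname Var Const : Type}.
Context (arity keylen : Rname -> nat) (md : Rname -> mode).

Definition sig_ok : Prop := forall r, 1 <= keylen r /\ keylen r <= arity r.

Definition term := (Var + Const)%type.

Record atom := Atom { arel : Rname; aargs : list term }.
Record fact := Fact { frel : Rname; fargs : list Const }.

Definition atom_wf (a : atom) : Prop := length (aargs a) = arity (arel a).
Definition fact_wf (f : fact) : Prop := length (fargs f) = arity (frel f).

Definition fset := fact -> Prop.
Definition subset (s t : fset) : Prop := forall f, s f -> t f.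
Definition setD (s t : fset) : fset := fun f => s f /\ ~ t f.
Definition setU (s t : fset) : fset := fun f => s f \/ t f.

Definition key_equal (f g : fact) : Prop :=
  frel f = frel g /\
  firstn (keylen (frel f)) (fargs f) = firstn (keylen (frel g)) (fargs g).

Definition sjf_query (q : list atom) : Prop :=
  NoDup (map arel q) /\ forall a, In a q -> atom_wf a.

Definition database (q : list atom) (db : list fact) : Prop :=
  (forall f, In f db -> fact_wf f) /\
  (forall f g, In f db -> In g db -> f <> g -> key_equal f g ->
      md (frel f) <> ModeC) /\
  (forall f, In f db -> exists a, In a q /\ arel a = frel f).

Definition setof (db : list fact) : fset := fun f => In f db.

Definition block (s : fset) (A : fact) : fset := fun B => s B /\ key_equal A B.

Definition consistent (s : fset) : Prop :=
  forall f g, s f -> s g -> key_equal f g -> f = g.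

Definition repair (s r : fset) : Prop :=
  subset r s /\ consistent r /\
  forall r', subset r r' -> subset r' s -> consistent r' -> subset r' r.

Definition valuation := Var -> Const.
Definition tval (th : valuation) (t : term) : Const :=
  match t with inl v => th v | inr c => c end.
Definition aval (th : valuation) (a : atom) : fact :=
  Fact (arel a) (map (tval th) (aargs a)).

Definition embeds (th : valuation) (q : list atom) (s : fset) : Prop :=
  forall a, In a q -> s (aval th a).

Definition satisfies (s : fset) (q : list atom) : Prop :=
  exists th : valuation, embeds th q s.

(* atom(A) is in q0 (q0 is a sub-list of q; relation names are unique in q) *)
Definition atom_of_in (q0 : list atom) (A : fact) : Prop :=
  exists a, In a q0 /\ arel a = frel A.

Definition garbage_set (q q0 : list atom) (db : list fact) (o : fset) : Prop :=
  subset o (setof db) /\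
  (forall A, o A -> atom_of_in q0 A /\ subset (block (setof db) A) o) /\
  (exists r, repair o r /\
     forall th : valuation, embeds th q (setU (setD (setof db) o) r) ->
       forall a, In a q0 -> ~ r (aval th a)).

End CQA.

From Stdlib Require Import List Classical.
Set Implicit Arguments.

(* If o is closed under key-equality inside db, a repair of db is exactly the
   union of a repair of db \ o and a repair of o.  Hence repairs of db \ o
   extend to repairs of db by adding the repair r of o from the garbage
   condition, and repairs of db restrict to repairs of db \ o.  An embedding
   of q into the extended repair cannot use a fact of r: such a fact has its
   atom in q0 (self-join-freeness identifies the atom), which the garbage
   condition forbids. *)

Section Repairs.

Context {Rname Const : Type} (keylen : Rname -> nat).
Implicit Types s o r : @fset Rname Const.

Definition setI s o : fset := fun f => s f /\ o f.

Definition block_closed s o : Prop :=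
  forall f g, o f -> s g -> key_equal keylen f g -> o g.

Lemma key_equal_sym (f g : @fact Rname Const) : key_equal keylen f g -> key_equal keylen g f.
Proof. intros [Hrel Hkey]; split; auto. Qed.

Lemma consistent_subset r r' :
  subset r r' -> consistent keylen r' -> consistent keylen r.
Proof. intros Hsub Hr' f g Hf Hg; apply Hr'; auto. Qed.

Lemma consistent_setU s o r1 r2 :
  block_closed s o -> subset r1 (setD s o) -> subset r2 o ->
  consistent keylen r1 -> consistent keylen r2 -> consistent keylen (setU r1 r2).
Proof.
  intros Hclosed Hr1 Hr2 Hcons1 Hcons2.
  assert (Hcross : forall f g, r1 f -> r2 g -> ~ key_equal keylen f g).
  { intros f g Hf Hg Hk. destruct (Hr1 f Hf) as [Hs Ho].
    apply Ho, (Hclosed g f); auto using key_equal_sym. }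
  intros f g [Hf|Hf] [Hg|Hg] Hk; auto.
  - exfalso; apply (Hcross f g); auto.
  - exfalso; apply (Hcross g f); auto using key_equal_sym.
Qed.

Lemma repair_setU s o r1 r2 :
  block_closed s o -> subset o s ->
  repair keylen (setD s o) r1 -> repair keylen o r2 ->
  repair keylen s (setU r1 r2).
Proof.
  intros Hclosed Hos [Hsub1 [Hcons1 Hmax1]] [Hsub2 [Hcons2 Hmax2]].
  split; [|split].
  - intros f [Hf|Hf]; [apply Hsub1 | apply Hos, Hsub2]; auto.
  - apply (consistent_setU Hclosed); auto.
  - intros R HR HRs HRcons f Hf.
    destruct (classic (o f)) as [Ho|Ho].
    + right. apply (Hmax2 (setI R o)).
      * intros g Hg; split; [apply HR; right|apply Hsub2]; auto.
      * intros g [_ Hg]; auto.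
      * apply (consistent_subset (r' := R)); [intros g [Hg _]|]; auto.
      * split; auto.
    + left. apply (Hmax1 (setD R o)).
      * intros g Hg; split; [apply HR; left|apply Hsub1]; auto.
      * intros g [Hg Hng]; split; auto.
      * apply (consistent_subset (r' := R)); [intros g [Hg _]|]; auto.
      * split; auto.
Qed.

Lemma repair_setD s o r :
  block_closed s o -> repair keylen s r -> repair keylen (setD s o) (setD r o).
Proof.
  intros Hclosed [Hsub [Hcons Hmax]].
  split; [|split].
  - intros f [Hf Ho]; split; auto.
  - apply (consistent_subset (r' := r)); [intros f [Hf _]|]; auto.
  - intros R HR HRs HRcons f Hf.
    assert (Hext : subset (setU R (setI r o)) r).
    { apply Hmax.
      - intros g Hg. destruct (classic (o g)) as [Ho|Ho].
        + right; split; auto.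
        + left; apply HR; split; auto.
      - intros g [Hg|[Hg _]]; [apply HRs|apply Hsub]; auto.
      - apply (consistent_setU Hclosed); auto.
        + intros g [_ Hg]; auto.
        + apply (consistent_subset (r' := r)); [intros g [Hg _]|]; auto. }
    split; [apply Hext; left | apply HRs]; auto.
Qed.

End Repairs.

Section Embeddings.

Context {Rname Var Const : Type}.
Implicit Types (q : list (@atom Rname Var Const)) (s t : @fset Rname Const).

Lemma embeds_subset (th : valuation) q s t :
  embeds th q s -> subset s t -> embeds th q t.
Proof. intros Hs Hst a Ha; apply Hst, Hs, Ha. Qed.

Lemma NoDup_map_inj {A B : Type} (f : A -> B) (l : list A) :
  NoDup (map f l) -> forall x y, In x l -> In y l -> f x = f y -> x = y.
Proof.
  induction l as [|a l IH]; simpl; intros Hnd x y Hx Hy Hf; [contradiction|].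
  inversion Hnd as [|? ? Hnin Hnd']; subst.
  destruct Hx as [<-|Hx], Hy as [<-|Hy]; auto.
  - exfalso; apply Hnin; rewrite Hf; apply in_map; auto.
  - exfalso; apply Hnin; rewrite <- Hf; apply in_map; auto.
Qed.

Lemma atom_of_in_aval q q0 (th : valuation) a :
  NoDup (map arel q) -> incl q0 q -> In a q ->
  atom_of_in q0 (aval th a) -> In a q0.
Proof.
  intros Hnd Hincl Ha [a' [Ha' Hrel]].
  replace a with a'; auto.
  apply (NoDup_map_inj arel q Hnd); auto.
Qed.

Lemma embeds_setU_garbage q q0 s r ro (th : valuation) :
  NoDup (map arel q) -> incl q0 q ->
  (forall A, ro A -> atom_of_in q0 A) ->
  (forall th', embeds th' q (setU s ro) -> forall a, In a q0 -> ~ ro (aval th' a)) ->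
  subset r s -> embeds th q (setU r ro) -> embeds th q r.
Proof.
  intros Hnd Hincl Hatom Hgarbage Hrs Hth a Ha.
  destruct (Hth a Ha) as [Hr|Hro]; auto.
  exfalso.
  assert (Hth_s : embeds th q (setU s ro)).
  { apply (embeds_subset Hth); intros f [Hf|Hf]; [left; apply Hrs|right]; auto. }
  apply (Hgarbage th Hth_s a); auto.
  exact (atom_of_in_aval Hnd Hincl Ha (Hatom _ Hro)).
Qed.

End Embeddings.

Theorem lemma16 (Rname Var Const : Type)
  (arity keylen : Rname -> nat) (md : Rname -> mode)
  (q q0 : list (@atom Rname Var Const)) (db : list (@fact Rname Const))
  (o : @fset Rname Const) :
  sig_ok arity keylen ->
  sjf_query arity q ->
  incl q0 q ->
  database arity keylen md q db ->
  garbage_set keylen q q0 db o ->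
  ((forall r, repair keylen (setof db) r -> satisfies r q) <->
   (forall r, repair keylen (setD (setof db) o) r -> satisfies r q)).
Proof.
  intros _ [Hnd _] Hincl _ [Hodb [Hoblock [ro [Hro Hgarbage]]]].
  assert (Hclosed : block_closed keylen (setof db) o).
  { intros f g Hf Hg Hk; apply (proj2 (Hoblock f Hf)); split; auto. }
  split; intros Hsat r Hr.
  - destruct (Hsat _ (repair_setU Hclosed Hodb Hr Hro)) as [th Hth].
    exists th.
    apply (embeds_setU_garbage (s := setD (setof db) o) (ro := ro) Hnd Hincl); auto.
    + intros A HA; apply (Hoblock A), (proj1 Hro), HA.
    + apply (proj1 Hr).
  - destruct (Hsat _ (repair_setD Hclosed Hr)) as [th Hth].
    exists th.
    apply (embeds_subset Hth); intros f [Hf _]; exact Hf.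
Qed.
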